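(* Let $(S_i,\mathscr T_i)_{i\in I}$ be a non-empty family of stable topological spaces, and equip $\prod_{i\in I}S_i$ with the stable product topology. Then $\prod_{i\in I}S_i$ is stable compact if and only if $S_i$ is stable compact for every $i\in I$.
   Context: $L^0$ is the ring of real measurable functions on a probability space modulo a.e. equality. An $L^0$-module $E$ is stable if for every countable measurable partition $(A_k)$ of $\Omega$ and $(x_k)\subset E$ there is a unique $x=\sum_k1_{A_k}x_k$ with $1_{A_k}x=1_{A_k}x_k$. A nonempty subset is stable if closed under such concatenations; for stable sets $Y_k$, $\sum_k1_{A_k}Y_k=\{\sum_k1_{A_k}y_k:y_k\in Y_k\}$, and a nonempty collection of stable sets is stable if closed under this operation. A stable topological space is a stable subset $S$ of a stable $L^0$-module with a topology having a base which is a stable collection of stable sets. A filter is stable if it has a filter base which is a stable collection of stable sets; $S$ is stable compact if every stable filter on $S$ has a cluster point in $S$. If $S_i\subset E_i$, then $\prod_iS_i$ is a stable subset of the product module $\prod_iE_i$ (concatenation coordinatewise). If $\mathscr B_i$ is a base of $\mathscr T_i$ which is a stable collection of stable sets, the stable product topology on $\prod_iS_i$ is the topology with base consisting of all sets $\sum_k1_{A_k}\prod_iU^k_i$, where $(A_k)$ is a countable measurable partition and for each $k$, $U^k_i\in\mathscr B_i$ for finitely many $i$ and $U^k_i=S_i$ for all other $i$. *)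

From Stdlib Require Import Reals List ClassicalEpsilon FunctionalExtensionality.
Open Scope R_scope.
Set Implicit Arguments.

Record ProbSpace := {
  Om : Type;
  meas : (Om -> Prop) -> Prop;
  prob : (Om -> Prop) -> R;
  meas_ext : forall A B : Om -> Prop, (forall w, A w <-> B w) -> meas A -> meas B;
  prob_ext : forall A B : Om -> Prop, (forall w, A w <-> B w) -> prob A = prob B;
  meas_full : meas (fun _ => True);
  meas_compl : forall A, meas A -> meas (fun w => ~ A w);
  meas_union : forall A : nat -> Om -> Prop,
      (forall n, meas (A n)) -> meas (fun w => exists n, A n w);
  prob_nonneg : forall A, meas A -> 0 <= prob A;
  prob_full : prob (fun _ => True) = 1;
  prob_sigma : forall A : nat -> Om -> Prop,
      (forall n, meas (A n)) ->
      (forall m n, m <> n -> forall w, A m w -> A n w -> False) ->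
      infinite_sum (fun n => prob (A n)) (prob (fun w => exists n, A n w))
}.

Definition measurable (P : ProbSpace) (f : Om P -> R) : Prop :=
  forall a : R, meas P (fun w => f w <= a).

Definition ae_eq (P : ProbSpace) (f g : Om P -> R) : Prop :=
  exists N : Om P -> Prop, meas P N /\ prob P N = 0 /\
    forall w, ~ N w -> f w = g w.

Arguments measurable {P} f.
Arguments ae_eq {P} f g.

Definition indic (P : ProbSpace) (A : Om P -> Prop) : Om P -> R :=
  fun w => if excluded_middle_informative (A w) then 1 else 0.

(* L^0-modules: scalar action by (representatives of) L^0 elements,   *)
(* well defined on a.e.-classes.                                       *)
Arguments indic {P} A.

Record L0Module (P : ProbSpace) := {
  car :> Type;
  mzero : car;
  madd : car -> car -> car;
  mopp : car -> car;
  smul : (Om P -> R) -> car -> car;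
  madd_assoc : forall x y z, madd x (madd y z) = madd (madd x y) z;
  madd_comm : forall x y, madd x y = madd y x;
  madd_zero : forall x, madd mzero x = x;
  madd_opp : forall x, madd (mopp x) x = mzero;
  smul_one : forall x, smul (fun _ => 1) x = x;
  smul_mul : forall f g x, measurable f -> measurable g ->
      smul f (smul g x) = smul (fun w => f w * g w) x;
  smul_addl : forall f g x, measurable f -> measurable g ->
      smul (fun w => f w + g w) x = madd (smul f x) (smul g x);
  smul_addr : forall f x y, measurable f ->
      smul f (madd x y) = madd (smul f x) (smul f y);
  smul_ae : forall f g x, measurable f -> measurable g -> ae_eq f g ->
      smul f x = smul g x
}.

Arguments mzero {P} l.
Arguments madd {P} l _ _.
Arguments mopp {P} l _.
Arguments smul {P} l _ _.

Definition partition (P : ProbSpace) (A : nat -> Om P -> Prop) : Prop :=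
  (forall k, meas P (A k)) /\
  (forall m n, m <> n -> forall w, A m w -> A n w -> False) /\
  (forall w, exists k, A k w).

Arguments partition {P} A.

Definition restr (P : ProbSpace) (E : L0Module P) (A : Om P -> Prop) (x : E) : E :=
  smul E (indic A) x.

Definition is_concat (P : ProbSpace) (E : L0Module P) (A : nat -> Om P -> Prop)
  (xs : nat -> E) (x : E) : Prop :=
  forall k, restr E (A k) x = restr E (A k) (xs k).

Definition stable_module (P : ProbSpace) (E : L0Module P) : Prop :=
  forall A, partition A -> forall xs : nat -> E,
    exists x, is_concat E A xs x /\ (forall y, is_concat E A xs y -> y = x).

Definition stable_set (P : ProbSpace) (E : L0Module P) (Y : E -> Prop) : Prop :=
  (exists y, Y y) /\
  forall A, partition A -> forall ys : nat -> E, (forall k, Y (ys k)) ->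
    forall x, is_concat E A ys x -> Y x.

Definition concat_sets (P : ProbSpace) (E : L0Module P) (A : nat -> Om P -> Prop)
  (Ys : nat -> E -> Prop) : E -> Prop :=
  fun x => exists ys : nat -> E, (forall k, Ys k (ys k)) /\ is_concat E A ys x.

Definition set_eq {X : Type} (U V : X -> Prop) : Prop := forall x, U x <-> V x.
Definition subset {X : Type} (U V : X -> Prop) : Prop := forall x, U x -> V x.

Definition stable_coll (P : ProbSpace) (E : L0Module P) (C : (E -> Prop) -> Prop) : Prop :=
  (exists Y, C Y) /\
  (forall Y, C Y -> stable_set E Y) /\
  forall A, partition A -> forall Ys : nat -> E -> Prop, (forall k, C (Ys k)) ->
    exists Z, C Z /\ set_eq Z (concat_sets E A Ys).

Definition is_topology {X : Type} (S : X -> Prop) (T : (X -> Prop) -> Prop) : Prop :=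
  (forall U, T U -> subset U S) /\
  (exists U, T U /\ set_eq U S) /\
  (exists U, T U /\ set_eq U (fun _ => False)) /\
  (forall fam : (X -> Prop) -> Prop, (forall U, fam U -> T U) ->
     exists V, T V /\ set_eq V (fun x => exists U, fam U /\ U x)) /\
  (forall U1 U2, T U1 -> T U2 -> exists V, T V /\ set_eq V (fun x => U1 x /\ U2 x)) /\
  (forall U V, T U -> set_eq U V -> T V).

Definition is_base {X : Type} (T : (X -> Prop) -> Prop) (B : (X -> Prop) -> Prop) : Prop :=
  (forall V, B V -> T V) /\
  forall U, T U -> forall x, U x -> exists V, B V /\ V x /\ subset V U.

Definition is_filter {X : Type} (S : X -> Prop) (F : (X -> Prop) -> Prop) : Prop :=
  (forall G, F G -> subset G S) /\
  (exists G, F G /\ set_eq G S) /\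
  (forall G, F G -> exists x, G x) /\
  (forall G1 G2, F G1 -> F G2 -> exists G, F G /\ set_eq G (fun x => G1 x /\ G2 x)) /\
  (forall G H, F G -> subset G H -> subset H S -> F H).

Definition is_filter_base {X : Type} (F : (X -> Prop) -> Prop) (FB : (X -> Prop) -> Prop) : Prop :=
  (forall G, FB G -> F G) /\ (forall G, F G -> exists H, FB H /\ subset H G).

Definition stable_filter (P : ProbSpace) (E : L0Module P) (S : E -> Prop)
  (F : (E -> Prop) -> Prop) : Prop :=
  is_filter S F /\ exists FB, is_filter_base F FB /\ stable_coll E FB.

Definition cluster_point {X : Type} (T : (X -> Prop) -> Prop) (F : (X -> Prop) -> Prop)
  (x : X) : Prop :=
  forall U, T U -> U x -> forall G, F G -> exists y, U y /\ G y.

Definition stable_compact (P : ProbSpace) (E : L0Module P) (S : E -> Prop)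
  (T : (E -> Prop) -> Prop) : Prop :=
  forall F, stable_filter E S F -> exists x, S x /\ cluster_point T F x.

Section ProdModule.
Variables (P : ProbSpace) (I : Type) (E : I -> L0Module P).

Definition pcar := forall i, E i.

Lemma p_assoc : forall x y z : pcar,
  (fun i => madd (E i) (x i) ((fun i => madd (E i) (y i) (z i)) i)) =
  (fun i => madd (E i) ((fun i => madd (E i) (x i) (y i)) i) (z i)).
Proof. intros; apply functional_extensionality_dep; intro i; apply madd_assoc. Qed.
Lemma p_comm : forall x y : pcar,
  (fun i => madd (E i) (x i) (y i)) = (fun i => madd (E i) (y i) (x i)).
Proof. intros; apply functional_extensionality_dep; intro i; apply madd_comm. Qed.
Lemma p_zero : forall x : pcar,
  (fun i => madd (E i) ((fun i => mzero (E i)) i) (x i)) = x.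
Proof. intros; apply functional_extensionality_dep; intro i; apply madd_zero. Qed.
Lemma p_opp : forall x : pcar,
  (fun i => madd (E i) ((fun i => mopp (E i) (x i)) i) (x i)) = (fun i => mzero (E i)).
Proof. intros; apply functional_extensionality_dep; intro i; apply madd_opp. Qed.
Lemma p_one : forall x : pcar, (fun i => smul (E i) (fun _ => 1) (x i)) = x.
Proof. intros; apply functional_extensionality_dep; intro i; apply smul_one. Qed.
Lemma p_mul : forall f g (x : pcar), measurable f -> measurable g ->
  (fun i => smul (E i) f ((fun i => smul (E i) g (x i)) i)) =
  (fun i => smul (E i) (fun w => f w * g w) (x i)).
Proof. intros; apply functional_extensionality_dep; intro i; now apply smul_mul. Qed.
Lemma p_addl : forall f g (x : pcar), measurable f -> measurable g ->
  (fun i => smul (E i) (fun w => f w + g w) (x i)) =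
  (fun i => madd (E i) ((fun i => smul (E i) f (x i)) i) ((fun i => smul (E i) g (x i)) i)).
Proof. intros; apply functional_extensionality_dep; intro i; now apply smul_addl. Qed.
Lemma p_addr : forall f (x y : pcar), measurable f ->
  (fun i => smul (E i) f ((fun i => madd (E i) (x i) (y i)) i)) =
  (fun i => madd (E i) ((fun i => smul (E i) f (x i)) i) ((fun i => smul (E i) f (y i)) i)).
Proof. intros; apply functional_extensionality_dep; intro i; now apply smul_addr. Qed.
Lemma p_ae : forall f g (x : pcar), measurable f -> measurable g -> ae_eq f g ->
  (fun i => smul (E i) f (x i)) = (fun i => smul (E i) g (x i)).
Proof. intros; apply functional_extensionality_dep; intro i; now apply smul_ae. Qed.

Definition prodModule : L0Module P :=
  {| car := pcar;
     mzero := fun i => mzero (E i);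
     madd := fun x y i => madd (E i) (x i) (y i);
     mopp := fun x i => mopp (E i) (x i);
     smul := fun f x i => smul (E i) f (x i);
     madd_assoc := p_assoc; madd_comm := p_comm; madd_zero := p_zero;
     madd_opp := p_opp; smul_one := p_one; smul_mul := p_mul;
     smul_addl := p_addl; smul_addr := p_addr; smul_ae := p_ae |}.

Definition prodSet (S : forall i, E i -> Prop) : prodModule -> Prop :=
  fun x => forall i, S i (x i).

(* basic sets  sum_k 1_{A_k} prod_i U^k_i  of the stable product topology *)
Definition prodBase (S : forall i, E i -> Prop) (B : forall i, (E i -> Prop) -> Prop)
  (V : prodModule -> Prop) : Prop :=
  exists (A : nat -> Om P -> Prop) (fin : nat -> list I)
         (U : nat -> forall i, E i -> Prop),
    partition A /\
    (forall k i, In i (fin k) -> B i (U k i)) /\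
    (forall k i, ~ In i (fin k) -> set_eq (U k i) (S i)) /\
    set_eq V (concat_sets prodModule A
                (fun k (x : prodModule) => forall i, U k i (x i))).

Definition prodTop (S : forall i, E i -> Prop) (B : forall i, (E i -> Prop) -> Prop)
  (U : prodModule -> Prop) : Prop :=
  subset U (prodSet S) /\
  forall x, U x -> exists V, prodBase S B V /\ V x /\ subset V U.

End ProdModule.

From Stdlib Require Import Reals Lra Classical ClassicalEpsilon
  FunctionalExtensionality PropExtensionality ProofIrrelevance Cantor.
From Stdlib Require List.
From mathcomp Require classical_sets boolp.
Open Scope R_scope.

(* If the product is stable compact, a stable filter on a factor [S i] pulls back
   along the [i]-th projection to a stable filter on the product; a cluster point
   of the pullback projects to a cluster point of the filter because cylinders
   over open sets are open.

   Conversely, refine a stable filter on the product to a maximal stable filter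
   [U] (Zorn: a chain of stable filters is bounded by the filter generated by the
   countable concatenations of its members).  Each projection of [U] is a stable
   filter, hence has a cluster point [x i].  By maximality [U] contains every
   basic cylinder around [x i], hence, taking finite intersections and countable
   concatenations, every basic neighbourhood of [x]; so [x] is a cluster point of
   [U], and a fortiori of the given filter. *)

Lemma set_ext {X : Type} {U V : X -> Prop} : set_eq U V -> U = V.
Proof.
  intro H; apply functional_extensionality; intro x.
  apply propositional_extensionality, H.
Qed.

Lemma choice_dep {A : Type} {B : A -> Type} (R : forall a, B a -> Prop) :
  (forall a, exists b, R a b) -> exists f : forall a, B a, forall a, R a (f a).
Proof.
  intro H.
  exists (fun a => proj1_sig (constructive_indefinite_description _ (H a))).
  intro a; exact (proj2_sig (constructive_indefinite_description _ (H a))).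
Qed.

Lemma zorn_preorder {T : Type} (t0 : T) (R : T -> T -> Prop) :
  (forall t, R t t) -> (forall r s t, R r s -> R s t -> R r t) ->
  (forall A : T -> Prop, (forall s t, A s -> A t -> R s t \/ R t s) ->
     exists t, forall s, A s -> R s t) ->
  exists t, forall s, R t s -> R s t.
Proof.
  intros Hrefl Htrans Hchain.
  pose (Rb := fun s t => boolp.asbool (R s t)).
  assert (HRb : forall s t, Rb s t = true <-> R s t).
  { intros s t; symmetry; apply Bool.reflect_iff, boolp.asboolP. }
  destruct (@classical_sets.ZL_preorder T t0 Rb) as [t Ht].
  - intro s; apply HRb, Hrefl.
  - intros r s t H1 H2; apply HRb; apply HRb in H1; apply HRb in H2; eauto.
  - intros A HA. destruct (Hchain A) as [t Ht].
    + intros s t' Hs Ht'. destruct (HA s t' Hs Ht') as [H|H]; apply HRb in H; auto.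
    + exists t; intros s Hs; apply HRb, Ht, Hs.
  - exists t; intros s Hs; apply HRb, Ht, HRb, Hs.
Qed.

Section Measurable.
Context {P : ProbSpace}.

Lemma meas_empty : meas P (fun _ => False).
Proof.
  apply (meas_ext P (fun w => ~ True)); [tauto | apply meas_compl, meas_full].
Qed.

Lemma meas_inter (A B : Om P -> Prop) :
  meas P A -> meas P B -> meas P (fun w => A w /\ B w).
Proof.
  intros HA HB.
  pose (C := fun n : nat => match n with O => fun w => ~ A w | _ => fun w => ~ B w end).
  apply (meas_ext P (fun w => ~ exists n, C n w)).
  - intro w; split.
    + intro H; split; apply NNPP; intro H'; apply H; [exists O | exists 1%nat]; exact H'.
    + intros [H1 H2] [[|n] Hn]; auto.
  - apply meas_compl, meas_union; intros [|n]; apply meas_compl; auto.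
Qed.

Lemma indic_measurable (A : Om P -> Prop) : meas P A -> measurable (indic A).
Proof.
  intros HA a; unfold indic.
  destruct (Rle_dec 1 a); [|destruct (Rle_dec 0 a)].
  - apply (meas_ext P (fun _ => True)); [|apply meas_full].
    intro w; destruct excluded_middle_informative; split; auto; lra.
  - apply (meas_ext P (fun w => ~ A w)); [|apply meas_compl; auto].
    intro w; destruct excluded_middle_informative; split; intros; try lra; tauto.
  - apply (meas_ext P (fun _ => False)); [|apply meas_empty].
    intro w; destruct excluded_middle_informative; split; intros; try lra; tauto.
Qed.

Definition part_full : nat -> Om P -> Prop := fun n _ => n = O.

Definition part_two (A : Om P -> Prop) : nat -> Om P -> Prop :=
  fun n => match n with O => A | 1%nat => fun w => ~ A w | _ => fun _ => False end.

(* The common refinement of [A] and the partitions [A' k] of its pieces,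
   indexed through the Cantor pairing. *)
Definition part_pair (A : nat -> Om P -> Prop) (A' : nat -> nat -> Om P -> Prop) :
  nat -> Om P -> Prop :=
  fun n w => A (fst (of_nat n)) w /\ A' (fst (of_nat n)) (snd (of_nat n)) w.

Lemma partition_full : partition part_full.
Proof.
  split; [|split].
  - intros [|k]; [apply (meas_ext P (fun _ => True)), meas_full
                | apply (meas_ext P (fun _ => False)), meas_empty];
      intro w; unfold part_full; intuition discriminate.
  - unfold part_full; intros m n Hmn w H1 H2; congruence.
  - intro w; exists O; reflexivity.
Qed.

Lemma partition_two (A : Om P -> Prop) : meas P A -> partition (part_two A).
Proof.
  intro HA; split; [|split].
  - intros [|[|k]]; simpl; auto using meas_empty, meas_compl.
  - intros [|[|m]] [|[|n]] Hmn w; simpl; tauto.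
  - intro w; destruct (classic (A w)); [exists O | exists 1%nat]; simpl; auto.
Qed.

Lemma partition_pair (A : nat -> Om P -> Prop) (A' : nat -> nat -> Om P -> Prop) :
  partition A -> (forall k, partition (A' k)) -> partition (part_pair A A').
Proof.
  intros [HAm [HAd HAc]] HA'; split; [|split].
  - intro n; apply meas_inter; [apply HAm | apply (HA' _)].
  - intros m n Hmn w [H1 H2] [H3 H4].
    destruct (of_nat m) as [k l] eqn:Em, (of_nat n) as [k' l'] eqn:En; simpl in *.
    destruct (PeanoNat.Nat.eq_dec k k') as [<-|Hk]; [|exact (HAd k k' Hk w H1 H3)].
    destruct (PeanoNat.Nat.eq_dec l l') as [<-|Hl]; [|exact (proj1 (proj2 (HA' k)) l l' Hl w H2 H4)].
    apply Hmn; rewrite <- (cancel_to_of m), <- (cancel_to_of n), Em, En; reflexivity.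
  - intro w; destruct (HAc w) as [k Hk], (proj2 (proj2 (HA' k)) w) as [l Hl].
    exists (to_nat (k, l)); unfold part_pair; rewrite cancel_of_to; auto.
Qed.

End Measurable.

Section Module.
Context {P : ProbSpace} {E : L0Module P}.

Definition agree (A : Om P -> Prop) (x y : E) : Prop := restr E A x = restr E A y.

Definition agree_nbhd (A : Om P -> Prop) (W : E -> Prop) (v : E) : Prop :=
  exists w, W w /\ agree A w v.

Lemma restr_ext {A B : Om P -> Prop} (x : E) : set_eq A B -> restr E A x = restr E B x.
Proof. intro H; now rewrite (set_ext H). Qed.

Lemma restr_restr (A B : Om P -> Prop) (x : E) : meas P A -> meas P B ->
  restr E A (restr E B x) = restr E (fun w => A w /\ B w) x.
Proof.
  intros HA HB; unfold restr.
  rewrite smul_mul by (apply indic_measurable; auto).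
  f_equal; apply functional_extensionality; intro w; unfold indic.
  repeat destruct excluded_middle_informative; try tauto; lra.
Qed.

Lemma restr_full {A : Om P -> Prop} (x : E) : (forall w, A w) -> restr E A x = x.
Proof.
  intro H; unfold restr.
  replace (indic A) with (fun _ : Om P => 1); [apply smul_one|].
  apply functional_extensionality; intro w; unfold indic.
  destruct excluded_middle_informative as [_|n]; [reflexivity | contradiction (n (H w))].
Qed.

Lemma restr_empty {A : Om P -> Prop} (x : E) : (forall w, ~ A w) -> restr E A x = mzero E.
Proof.
  intro H.
  assert (H0 : indic A = indic (fun _ : Om P => False)).
  { apply functional_extensionality; intro w; unfold indic.
    do 2 destruct excluded_middle_informative; firstorder. }
  assert (Hm : measurable (indic (fun _ : Om P => False)))
    by apply indic_measurable, meas_empty.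
  (* [1_A x] is an additive idempotent, hence zero. *)
  pose (a := restr E A x).
  assert (Ha : a = madd E a a).
  { unfold a, restr; rewrite H0, <- smul_addl by auto.
    f_equal; apply functional_extensionality; intro w; unfold indic.
    destruct excluded_middle_informative; [tauto | lra]. }
  fold a.
  rewrite <- (madd_zero E a) at 1; rewrite <- (madd_opp E a) at 1.
  rewrite <- madd_assoc, <- Ha; apply madd_opp.
Qed.

Lemma agree_empty {A : Om P -> Prop} (x y : E) : (forall w, ~ A w) -> agree A x y.
Proof. intro H; unfold agree; rewrite !restr_empty; auto. Qed.

Lemma agree_full {A : Om P -> Prop} {x y : E} : (forall w, A w) -> agree A x y -> x = y.
Proof. unfold agree; intro H; rewrite !restr_full; auto. Qed.

Lemma agree_sub {A B : Om P -> Prop} {x y : E} : meas P A -> meas P B ->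
  (forall w, B w -> A w) -> agree A x y -> agree B x y.
Proof.
  intros HA HB Hs H; unfold agree in *.
  rewrite !(restr_ext (A := B) (B := fun w => B w /\ A w)) by firstorder.
  rewrite <- !restr_restr by auto; now rewrite H.
Qed.

Lemma agree_sym {A} {x y : E} : agree A x y -> agree A y x.
Proof. unfold agree; auto. Qed.

Lemma agree_trans {A} {x y z : E} : agree A x y -> agree A y z -> agree A x z.
Proof. unfold agree; congruence. Qed.

Lemma concat_setsE {A} {Ys : nat -> E -> Prop} {x} :
  concat_sets E A Ys x <-> forall k, exists y, Ys k y /\ agree (A k) x y.
Proof.
  split.
  - intros [ys [Hys Hx]] k; exists (ys k); split; auto; apply Hx.
  - intro H; destruct (choice_dep _ H) as [ys Hys].
    exists ys; split; intro k; apply Hys.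
Qed.

Lemma stable_set_glue {G : E -> Prop} {A x} : stable_set E G -> partition A ->
  (forall k, exists y, G y /\ agree (A k) x y) -> G x.
Proof.
  intros [_ HG] HA H; destruct (choice_dep _ H) as [ys Hys].
  apply (HG A HA ys); intro k; apply Hys.
Qed.

Lemma concat_sets_sub {A} {Ys Zs : nat -> E -> Prop} :
  (forall k z, Ys k z -> exists y, Zs k y /\ agree (A k) z y) ->
  subset (concat_sets E A Ys) (concat_sets E A Zs).
Proof.
  intros H x Hx; rewrite concat_setsE in Hx; apply concat_setsE; intro k.
  destruct (Hx k) as [z [Hz Hxz]], (H k z Hz) as [y [Hy Hzy]].
  exists y; split; [auto | eapply agree_trans; eauto].
Qed.

Lemma concat_sets_full (Y : E -> Prop) :
  set_eq (concat_sets E part_full (fun _ => Y)) Y.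
Proof.
  intro x; rewrite concat_setsE; split.
  - intro H; destruct (H O) as [y [Hy Hxy]].
    now rewrite (agree_full (fun w => eq_refl : part_full O w) Hxy).
  - intros Hx k; exists x; split; [auto | reflexivity].
Qed.

Lemma concat_sets_sub_stable {A} {Ys : nat -> E -> Prop} {G} :
  partition A -> stable_set E G -> (forall k, subset (Ys k) G) ->
  subset (concat_sets E A Ys) G.
Proof.
  intros HA HG H x Hx; rewrite concat_setsE in Hx.
  apply (stable_set_glue HG HA); intro k.
  destruct (Hx k) as [y [Hy Hxy]]; exists y; split; [apply (H k) |]; auto.
Qed.

Lemma concat_sets_const {A} {G : E -> Prop} : partition A -> stable_set E G ->
  set_eq (concat_sets E A (fun _ => G)) G.
Proof.
  intros HA HG x; split.
  - apply (concat_sets_sub_stable HA HG); intros k y Hy; auto.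
  - intro Hx; apply concat_setsE; intro k; exists x; split; [auto | reflexivity].
Qed.

Hypothesis HE : stable_module E.

Lemma eq_of_agree_partition {A} {x y : E} : partition A -> (forall k, agree (A k) x y) -> x = y.
Proof.
  intros HA H; destruct (HE _ HA (fun _ => y)) as [z [_ Hz]].
  rewrite (Hz x H); symmetry; apply Hz; intro k; reflexivity.
Qed.

Lemma agree_of_partition {C A} {x y : E} : partition C -> meas P A ->
  (forall m, agree (fun w => A w /\ C m w) x y) -> agree A x y.
Proof.
  intros HC HA H; apply (eq_of_agree_partition HC); intro m; unfold agree.
  rewrite !restr_restr by (apply HC || auto).
  rewrite !(restr_ext (A := fun w => C m w /\ A w) (B := fun w => A w /\ C m w)) by firstorder.
  apply H.
Qed.

Lemma concat_exists {A} (xs : nat -> E) : partition A -> exists x, forall k, agree (A k) x (xs k).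
Proof. intro HA; destruct (HE _ HA xs) as [x [Hx _]]; exists x; exact Hx. Qed.

Lemma glue_two {A} (x y : E) : meas P A ->
  exists z, agree A z x /\ agree (fun w => ~ A w) z y.
Proof.
  intro HA.
  destruct (concat_exists (fun n => match n with O => x | _ => y end) (partition_two A HA))
    as [z Hz].
  exists z; split; [apply (Hz O) | apply (Hz 1%nat)].
Qed.

Lemma stable_set_glue_two {G : E -> Prop} {A} {x y z : E} : meas P A -> stable_set E G ->
  G x -> G y -> agree A z x -> agree (fun w => ~ A w) z y -> G z.
Proof.
  intros HA HG Gx Gy H1 H2; apply (stable_set_glue HG (partition_two A HA)).
  intros [|[|k]]; [exists x | exists y | exists x]; split; auto.
  apply agree_empty; simpl; auto.
Qed.

Lemma concat_sets_stable {A} {Ys : nat -> E -> Prop} :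
  partition A -> (forall k, stable_set E (Ys k)) -> stable_set E (concat_sets E A Ys).
Proof.
  intros HA HY; split.
  - destruct (choice_dep _ (fun k => proj1 (HY k))) as [ys Hys].
    destruct (concat_exists ys HA) as [x Hx]; exists x, ys; split; auto.
  - intros C HC xs Hxs x Hx; rewrite concat_setsE; intro k.
    (* Glue, along [C], points of [Ys k] that agree with each [xs m] on [A k]. *)
    assert (H : forall m, exists g, Ys k g /\ agree (A k) (xs m) g)
      by (intro m; apply concat_setsE, Hxs).
    destruct (choice_dep _ H) as [g Hg], (concat_exists g HC) as [z Hz].
    exists z; split.
    + apply (stable_set_glue (HY k) HC); intro m; exists (g m); split; [apply Hg | apply Hz].
    + assert (HAk := proj1 HA k).
      apply (agree_of_partition HC HAk); intro m.
      assert (HCm := proj1 HC m).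
      assert (Hm : meas P (fun w => A k w /\ C m w)) by (apply meas_inter; auto).
      apply (agree_trans (y := xs m));
        [apply (agree_sub HCm Hm); [tauto | apply Hx] |].
      apply (agree_trans (y := g m));
        [apply (agree_sub HAk Hm); [tauto | apply Hg] |].
      apply agree_sym, (agree_sub HCm Hm); [tauto | apply Hz].
Qed.

Lemma concat_sets_concat {A} {A' : nat -> nat -> Om P -> Prop} (Gs : nat -> nat -> E -> Prop) :
  partition A -> (forall k, partition (A' k)) ->
  set_eq (concat_sets E A (fun k => concat_sets E (A' k) (Gs k)))
         (concat_sets E (part_pair A A') (fun n => Gs (fst (of_nat n)) (snd (of_nat n)))).
Proof.
  intros HA HA' x; rewrite !concat_setsE; split.
  - intros H n; destruct (of_nat n) as [k l] eqn:En.
    destruct (H k) as [z [Hz Hxz]]; rewrite concat_setsE in Hz.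
    destruct (Hz l) as [g [Hg Hzg]].
    exists g; split; [auto |]; unfold part_pair; rewrite En; simpl.
    assert (HAk := proj1 HA k); assert (HAl := proj1 (HA' k) l).
    assert (Hm : meas P (fun w => A k w /\ A' k l w)) by (apply meas_inter; auto).
    apply (agree_trans (y := z));
      [apply (agree_sub HAk Hm) | apply (agree_sub HAl Hm)]; auto; tauto.
  - intros H k; destruct (choice_dep _ H) as [g Hg].
    destruct (concat_exists (fun l => g (to_nat (k, l))) (HA' k)) as [z Hz].
    exists z; split.
    + apply concat_setsE; intro l; exists (g (to_nat (k, l))); split; [|apply Hz].
      generalize (proj1 (Hg (to_nat (k, l)))); now rewrite cancel_of_to.
    + assert (HAk := proj1 HA k); apply (agree_of_partition (HA' k) HAk); intro l.
      assert (HAl := proj1 (HA' k) l).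
      assert (Hm : meas P (fun w => A k w /\ A' k l w)) by (apply meas_inter; auto).
      generalize (proj2 (Hg (to_nat (k, l)))); unfold part_pair; rewrite cancel_of_to; simpl.
      intro Hxg; apply (agree_trans (y := g (to_nat (k, l)))); [exact Hxg |].
      apply agree_sym, (agree_sub HAl Hm); [tauto | apply Hz].
Qed.

Lemma concat_sets_refine {C A} (f : nat -> nat) {Hs Gs : nat -> E -> Prop} :
  partition C -> partition A -> (forall n w, C n w -> A (f n) w) ->
  (forall n, subset (Hs n) (Gs (f n))) -> (forall k, stable_set E (Gs k)) ->
  subset (concat_sets E C Hs) (concat_sets E A Gs).
Proof.
  intros HC HA HCA HHG HG x Hx; rewrite concat_setsE in Hx; apply concat_setsE; intro k.
  destruct (choice_dep _ Hx) as [h Hh], (proj1 (HG k)) as [g0 Hg0].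
  pose (ys := fun n => if PeanoNat.Nat.eq_dec (f n) k then h n else g0).
  destruct (concat_exists ys HC) as [y Hy].
  exists y; split.
  - apply (stable_set_glue (HG k) HC); intro n; exists (ys n); split; [|apply Hy].
    unfold ys; destruct PeanoNat.Nat.eq_dec as [<-|]; [apply HHG, Hh | exact Hg0].
  - assert (HAk := proj1 HA k); apply (agree_of_partition HC HAk); intro n.
    assert (HCn := proj1 HC n).
    assert (Hm : meas P (fun w => A k w /\ C n w)) by (apply meas_inter; auto).
    destruct (PeanoNat.Nat.eq_dec (f n) k) as [e|e].
    + apply (agree_trans (y := h n)); [apply (agree_sub HCn Hm); [tauto | apply Hh] |].
      apply agree_sym, (agree_sub HCn Hm); [tauto |].
      generalize (Hy n); unfold ys; destruct PeanoNat.Nat.eq_dec; [auto | contradiction].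
    + apply agree_empty; intros w [H1 H2].
      exact (proj1 (proj2 HA) (f n) k e w (HCA n w H2) H1).
Qed.

End Module.

Arguments agree {P} E A x y.
Arguments agree_nbhd {P} E A W v.

Definition upward {X : Type} (S : X -> Prop) (C : (X -> Prop) -> Prop) (H : X -> Prop) : Prop :=
  subset H S /\ exists Z, C Z /\ subset Z H.

Definition stable_base {P : ProbSpace} (E : L0Module P) (S : E -> Prop)
  (C : (E -> Prop) -> Prop) : Prop :=
  stable_coll E C /\ (forall Z, C Z -> subset Z S) /\
  (forall Z1 Z2, C Z1 -> C Z2 -> exists Z, C Z /\ subset Z (fun x => Z1 x /\ Z2 x)).

Definition stable_members {P : ProbSpace} (E : L0Module P) (F : (E -> Prop) -> Prop)
  (G : E -> Prop) : Prop :=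
  F G /\ stable_set E G.

Definition concat_hull {P : ProbSpace} (E : L0Module P) (C : (E -> Prop) -> Prop)
  (Z : E -> Prop) : Prop :=
  exists A Gs, partition A /\ (forall k, C (Gs k)) /\ Z = concat_sets E A Gs.

Definition maximal_stable_filter {P : ProbSpace} (E : L0Module P) (S : E -> Prop)
  (U : (E -> Prop) -> Prop) : Prop :=
  stable_filter E S U /\
  forall F, stable_filter E S F -> (forall G, U G -> F G) -> forall G, F G -> U G.

Section StableFilter.
Context {P : ProbSpace} {E : L0Module P} {S : E -> Prop}.

Lemma stable_filter_sub {F G} : stable_filter E S F -> F G -> subset G S.
Proof. intros [[H _] _]; apply H. Qed.

Lemma stable_filter_full {F} : stable_filter E S F -> F S.
Proof. intros [[_ [[G [HG HGS]] _]] _]; now rewrite <- (set_ext HGS). Qed.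

Lemma stable_filter_nonempty {F G} : stable_filter E S F -> F G -> exists x, G x.
Proof. intros [[_ [_ [H _]]] _]; apply H. Qed.

Lemma stable_filter_inter {F G1 G2} : stable_filter E S F -> F G1 -> F G2 ->
  F (fun x => G1 x /\ G2 x).
Proof.
  intros [[_ [_ [_ [H _]]]] _] H1 H2.
  destruct (H G1 G2 H1 H2) as [G [HG HGe]]; now rewrite <- (set_ext HGe).
Qed.

Lemma stable_filter_up {F G H} : stable_filter E S F -> F G -> subset G H -> subset H S -> F H.
Proof. intros [[_ [_ [_ [_ Hup]]]] _]; apply Hup. Qed.

Lemma stable_filter_stable_sub {F G} : stable_filter E S F -> F G ->
  exists H, stable_members E F H /\ subset H G.
Proof.
  intros [_ [FB [[HFB HFB'] [_ [HFBst _]]]]] HG.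
  destruct (HFB' G HG) as [H [HH HHG]]; exists H; split; [split |]; auto.
Qed.

Lemma stable_filter_concat {F A Gs} : stable_filter E S F -> partition A ->
  (forall k, F (Gs k)) -> exists Z, F Z /\ subset Z (concat_sets E A Gs).
Proof.
  intros [_ [FB [[HFB HFB'] [_ [_ HFBc]]]]] HA HG.
  destruct (choice_dep _ (fun k => HFB' (Gs k) (HG k))) as [Hs HHs].
  destruct (HFBc A HA Hs (fun k => proj1 (HHs k))) as [Z [HZ HZe]].
  exists Z; split; [auto |]; intros x Hx; apply HZe in Hx.
  revert x Hx; apply concat_sets_sub; intros k z Hz.
  exists z; split; [apply HHs, Hz | reflexivity].
Qed.

Lemma stable_filter_inter_list {J : Type} {F} (l : list J) (G : J -> E -> Prop) :
  stable_filter E S F -> (forall j, List.In j l -> F (G j)) ->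
  F (fun z => S z /\ forall j, List.In j l -> G j z).
Proof.
  intros HF; induction l as [|j l IH]; intro Hl.
  - apply (stable_filter_up HF (stable_filter_full HF)); [|intros z []; auto].
    intros z Hz; split; [auto | intros j []].
  - apply (stable_filter_up HF (stable_filter_inter HF (Hl j (or_introl eq_refl))
             (IH (fun j' Hj' => Hl j' (or_intror Hj'))))).
    + intros z [Hj [Hz Hl']]; split; [auto | intros j' [<-|Hj']; auto].
    + intros z []; auto.
Qed.

Lemma stable_filter_upward {C} : stable_base E S C -> stable_filter E S (upward S C).
Proof.
  intros [[[Z0 HZ0] [HCst HCc]] [HCS HCd]].
  split; [split; [|split; [|split; [|split]]] |].
  - intros G [HGS _]; exact HGS.
  - exists S; split; [|intro; tauto].
    split; [intros x Hx; auto | exists Z0; split; auto].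
  - intros G [_ [Z [HZ HZG]]]; destruct (proj1 (HCst Z HZ)) as [x Hx]; exists x; auto.
  - intros G1 G2 [HG1S [Z1 [HZ1 HZG1]]] [HG2S [Z2 [HZ2 HZG2]]].
    destruct (HCd Z1 Z2 HZ1 HZ2) as [Z [HZ HZs]].
    exists (fun x => G1 x /\ G2 x); split; [|intro; tauto].
    split; [intros x [Hx _]; auto | exists Z; split; [auto |]].
    intros x Hx; destruct (HZs x Hx); auto.
  - intros G H [_ [Z [HZ HZG]]] HGH HHS; split; [auto | exists Z; split; auto].
    intros x Hx; auto.
  - exists C; split; [split|].
    + intros Z HZ; split; [apply HCS; auto | exists Z; split; [auto | intros x Hx; auto]].
    + intros G [_ [Z [HZ HZG]]]; exists Z; auto.
    + split; [exists Z0; auto | auto].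
Qed.

Lemma upward_stable_members {F G} : stable_filter E S F -> F G -> upward S (stable_members E F) G.
Proof.
  intros HF HG; split; [apply (stable_filter_sub HF HG) |].
  apply (stable_filter_stable_sub HF HG).
Qed.

Hypothesis HE : stable_module E.
Hypothesis HS : stable_set E S.

Lemma stable_filter_concat_mem {F A Gs} : stable_filter E S F -> partition A ->
  (forall k, F (Gs k)) -> F (concat_sets E A Gs).
Proof.
  intros HF HA HG; destruct (stable_filter_concat HF HA HG) as [Z [HZ HZs]].
  apply (stable_filter_up HF HZ HZs), (concat_sets_sub_stable HA HS).
  intro k; apply (stable_filter_sub HF (HG k)).
Qed.

Lemma stable_base_members {F} : stable_filter E S F -> stable_base E S (stable_members E F).
Proof.
  intro HF; split; [split; [|split] | split].
  - destruct (stable_filter_stable_sub HF (stable_filter_full HF)) as [G [HG _]].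
    exists G; exact HG.
  - intros G [_ HG]; exact HG.
  - intros A HA Ys HYs; exists (concat_sets E A Ys); split; [split | intro; tauto].
    + apply (stable_filter_concat_mem HF HA); intro k; apply HYs.
    + apply (concat_sets_stable HE HA); intro k; apply HYs.
  - intros G [HG _]; apply (stable_filter_sub HF HG).
  - intros G1 G2 [HG1 _] [HG2 _]; apply (stable_filter_stable_sub HF (stable_filter_inter HF HG1 HG2)).
Qed.

Lemma stable_base_single : stable_base E S (fun G => G = S).
Proof.
  split; [split; [|split] | split].
  - exists S; reflexivity.
  - intros G ->; exact HS.
  - intros A HA Ys HYs; exists S; split; [reflexivity |].
    replace Ys with (fun _ : nat => S) by (apply functional_extensionality; auto).
    intro x; symmetry; apply (concat_sets_const HA HS).
  - intros G ->; intros x Hx; exact Hx.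
  - intros G1 G2 -> ->; exists S; split; [reflexivity | intros x Hx; auto].
Qed.

Lemma concat_hull_incl {C G} : C G -> concat_hull E C G.
Proof.
  intro HG; exists part_full, (fun _ => G).
  split; [apply partition_full | split; [auto | symmetry; apply set_ext, concat_sets_full]].
Qed.

Lemma concat_hull_directed {C} : (forall G, C G -> stable_set E G) ->
  (forall G1 G2, C G1 -> C G2 -> exists G, C G /\ subset G (fun x => G1 x /\ G2 x)) ->
  forall Z1 Z2, concat_hull E C Z1 -> concat_hull E C Z2 ->
  exists Z, concat_hull E C Z /\ subset Z (fun x => Z1 x /\ Z2 x).
Proof.
  intros HC HCd Z1 Z2 [A [Gs [HA [HGs ->]]]] [A' [Gs' [HA' [HGs' ->]]]].
  assert (Hh : forall n, exists h, C h /\ subset h (fun x => Gs (fst (of_nat n)) x /\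
                                                      Gs' (snd (of_nat n)) x))
    by (intro n; apply HCd; auto).
  destruct (choice_dep _ Hh) as [h Hhs].
  assert (HAA' : partition (part_pair A (fun _ => A'))) by (apply partition_pair; auto).
  exists (concat_sets E (part_pair A (fun _ => A')) h); split.
  - exists (part_pair A (fun _ => A')), h.
    split; [exact HAA' | split; [intro n; apply Hhs | reflexivity]].
  - intros x Hx; split.
    + revert x Hx; apply (concat_sets_refine HE (fun n => fst (of_nat n)) HAA' HA).
      * intros n w [Hw _]; exact Hw.
      * intros n x Hx; apply Hhs, Hx.
      * intro k; apply HC, HGs.
    + revert x Hx; apply (concat_sets_refine HE (fun n => snd (of_nat n)) HAA' HA').
      * intros n w [_ Hw]; exact Hw.
      * intros n x Hx; apply Hhs, Hx.
      * intro k; apply HC, HGs'.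
Qed.

Lemma stable_base_concat_hull {C} : (exists G, C G) ->
  (forall G, C G -> stable_set E G /\ subset G S) ->
  (forall G1 G2, C G1 -> C G2 -> exists G, C G /\ subset G (fun x => G1 x /\ G2 x)) ->
  stable_base E S (concat_hull E C).
Proof.
  intros [G0 HG0] HC HCd; split; [split; [|split] | split].
  - exists G0; apply concat_hull_incl, HG0.
  - intros Z [A [Gs [HA [HGs ->]]]]; apply (concat_sets_stable HE HA); intro k; apply HC, HGs.
  - intros A HA Ys HYs.
    assert (H : forall k, exists p : (nat -> Om P -> Prop) * (nat -> E -> Prop),
               partition (fst p) /\ (forall l, C (snd p l)) /\
               Ys k = concat_sets E (fst p) (snd p)).
    { intro k; destruct (HYs k) as [A' [Gs HGs]]; exists (A', Gs); exact HGs. }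
    destruct (choice_dep _ H) as [p Hp].
    replace Ys with (fun k => concat_sets E (fst (p k)) (snd (p k)))
      by (apply functional_extensionality; intro k; symmetry; apply Hp).
    eexists; split.
    + exists (part_pair A (fun k => fst (p k))),
        (fun n => snd (p (fst (of_nat n))) (snd (of_nat n))).
      split; [apply (partition_pair _ _ HA); intro k; apply Hp |].
      split; [intro n; apply Hp | reflexivity].
    + intro x; symmetry; apply (concat_sets_concat HE (fun k => snd (p k)) HA).
      intro k; apply Hp.
  - intros Z [A [Gs [HA [HGs ->]]]]; apply (concat_sets_sub_stable HA HS).
    intro k; apply HC, HGs.
  - apply concat_hull_directed; [intros G HG; apply HC, HG | exact HCd].
Qed.

(* A chain of stable filters has a stable upper bound: the union of the chain
   is no longer closed under countable concatenation, so we take its hull. *)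
Lemma stable_filter_chain_ub (Phi : ((E -> Prop) -> Prop) -> Prop) :
  (exists F, Phi F) -> (forall F, Phi F -> stable_filter E S F) ->
  (forall F1 F2, Phi F1 -> Phi F2 -> (forall G, F1 G -> F2 G) \/ (forall G, F2 G -> F1 G)) ->
  exists U, stable_filter E S U /\ forall F, Phi F -> forall G, F G -> U G.
Proof.
  intros [F1 HF1] HPhi Hchain.
  pose (C := fun G => exists F, Phi F /\ stable_members E F G).
  exists (upward S (concat_hull E C)); split.
  - apply stable_filter_upward, stable_base_concat_hull.
    + destruct (stable_filter_stable_sub (HPhi F1 HF1) (stable_filter_full (HPhi F1 HF1)))
        as [G [HG _]].
      exists G, F1; auto.
    + intros G [F [HF [HFG HG]]]; split; [auto | apply (stable_filter_sub (HPhi F HF) HFG)].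
    + intros G1 G2 [Fa [HFa [HG1 _]]] [Fb [HFb [HG2 _]]].
      assert (Hboth : exists F, Phi F /\ F G1 /\ F G2)
        by (destruct (Hchain Fa Fb HFa HFb); [exists Fb | exists Fa]; auto).
      destruct Hboth as [F [HF [H1 H2]]].
      destruct (stable_filter_stable_sub (HPhi F HF) (stable_filter_inter (HPhi F HF) H1 H2))
        as [G [HG HGs]].
      exists G; split; [exists F; auto | exact HGs].
  - intros F HF G HG; destruct (upward_stable_members (HPhi F HF) HG) as [HGS [H [HH HHG]]].
    split; [exact HGS | exists H; split; [apply concat_hull_incl; exists F; auto | exact HHG]].
Qed.

Lemma maximal_stable_filter_exists {F0} : stable_filter E S F0 ->
  exists U, maximal_stable_filter E S U /\ forall G, F0 G -> U G.
Proof.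
  intro HF0.
  pose (Q := fun F => stable_filter E S F /\ forall G, F0 G -> F G).
  destruct (zorn_preorder (exist Q F0 (conj HF0 (fun G HG => HG)))
              (fun a b => forall G, proj1_sig a G -> proj1_sig b G)) as [[U [HU HF0U]] HUmax].
  - intros a G; auto.
  - intros a b c Hab Hbc G HG; auto.
  - intros A HA.
    destruct (stable_filter_chain_ub (fun F => F = F0 \/ exists a, A a /\ F = proj1_sig a))
      as [V [HV HVub]].
    + exists F0; left; reflexivity.
    + intros F [->|[a [_ ->]]]; [exact HF0 | apply (proj2_sig a)].
    + intros F1 F2 [->|[a [Ha ->]]] [->|[b [Hb ->]]]; auto.
      * left; apply (proj2_sig b).
      * right; apply (proj2_sig a).
    + exists (exist Q V (conj HV (fun G HG => HVub F0 (or_introl eq_refl) G HG))).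
      intros a Ha G HG; apply (HVub (proj1_sig a)); [right; exists a |]; auto.
  - exists U; split; [split; [exact HU |] | exact HF0U].
    intros F HF HUF G HG.
    exact (HUmax (exist Q F (conj HF (fun G HG => HUF G (HF0U G HG)))) HUF G HG).
Qed.

End StableFilter.

Definition fupdate {I : Type} {X : I -> Type} (f : forall j, X j) (i : I) (a : X i) :
  forall j, X j :=
  fun j => match excluded_middle_informative (i = j) with
           | left e => eq_rect i X a j e
           | right _ => f j
           end.

Lemma fupdate_same {I : Type} {X : I -> Type} (f : forall j, X j) (i : I) (a : X i) :
  fupdate f i a i = a.
Proof.
  unfold fupdate; destruct excluded_middle_informative as [e|n]; [|contradiction].
  now rewrite (proof_irrelevance _ e eq_refl).
Qed.

Lemma fupdate_other {I : Type} {X : I -> Type} (f : forall j, X j) (i j : I) (a : X i) :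
  i <> j -> fupdate f i a j = f j.
Proof. intro n; unfold fupdate; destruct excluded_middle_informative; [contradiction | auto]. Qed.

Lemma fupdate_ind {I : Type} {X : I -> Type} (Q : forall j, X j -> Prop)
  (f : forall j, X j) (i : I) (a : X i) :
  Q i a -> (forall j, Q j (f j)) -> forall j, Q j (fupdate f i a j).
Proof.
  intros Ha Hf j; destruct (classic (i = j)) as [<-|n].
  - now rewrite fupdate_same.
  - now rewrite fupdate_other.
Qed.

Section Product.
Context {P : ProbSpace} {I : Type} {E : I -> L0Module P}.

Notation PM := (prodModule E).

Definition cylinder (G : PM -> Prop) (i : I) (W : E i -> Prop) (z : PM) : Prop :=
  G z /\ W (z i).

Definition cylinders (C0 : (PM -> Prop) -> Prop) (i : I) (C : (E i -> Prop) -> Prop)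
  (Y : PM -> Prop) : Prop :=
  exists G W, C0 G /\ C W /\ Y = cylinder G i W.

Definition proj_image (i : I) (G : PM -> Prop) (v : E i) : Prop := exists z, G z /\ z i = v.

Definition proj_images (C0 : (PM -> Prop) -> Prop) (i : I) (Y : E i -> Prop) : Prop :=
  exists G, C0 G /\ Y = proj_image i G.

Lemma agree_prod A (x y : PM) : agree PM A x y <-> forall i, agree (E i) A (x i) (y i).
Proof.
  unfold agree; split.
  - intros H i; change (restr PM A x i = restr PM A y i); now rewrite H.
  - intro H; apply functional_extensionality_dep; exact H.
Qed.

Lemma prodSet_stable {S : forall i, E i -> Prop} :
  (forall i, stable_set (E i) (S i)) -> stable_set PM (prodSet S).
Proof.
  intro HS; split.
  - destruct (choice_dep _ (fun i => proj1 (HS i))) as [x Hx]; exists x; exact Hx.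
  - intros A HA ys Hys x Hx i; apply (stable_set_glue (HS i) HA); intro k.
    exists (ys k i); split; [apply Hys | apply (agree_prod (A k) x (ys k)), Hx].
Qed.

Lemma prodSet_fiber {S : forall i, E i -> Prop} i v :
  (forall i, stable_set (E i) (S i)) -> S i v -> exists z, prodSet S z /\ z i = v.
Proof.
  intros HS Hv; destruct (proj1 (prodSet_stable HS)) as [s Hs].
  exists (fupdate (X := fun j => E j) s i v); split; [| exact (fupdate_same _ i v)].
  intro j; apply (fupdate_ind (X := fun j => E j) (fun j u => S j u)); auto.
Qed.

Hypothesis HE : forall i, stable_module (E i).

Lemma prod_stable_module : stable_module PM.
Proof.
  intros A HA xs.
  destruct (choice_dep _ (fun i => concat_exists (HE i) (fun k => xs k i) HA)) as [x Hx].
  exists x; split.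
  - intro k; apply agree_prod; intro i; apply Hx.
  - intros y Hy; apply functional_extensionality_dep; intro i.
    apply (eq_of_agree_partition (HE i) HA); intro k.
    apply (agree_trans (y := xs k i)); [apply (agree_prod (A k) y (xs k)), Hy |].
    apply agree_sym, Hx.
Qed.

Lemma cylinder_stable {G i W} : stable_set PM G -> stable_set (E i) W ->
  (exists z, cylinder G i W z) -> stable_set PM (cylinder G i W).
Proof.
  intros HG HW Hne; split; [exact Hne |].
  intros A HA ys Hys x Hx; split.
  - apply (stable_set_glue HG HA); intro k; exists (ys k); split; [apply Hys | apply Hx].
  - apply (stable_set_glue HW HA); intro k; exists (ys k i); split; [apply Hys |].
    apply (agree_prod (A k) x (ys k)), Hx.
Qed.

Lemma concat_cylinder {A Gs i Ws} : partition A ->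
  (forall k, stable_set PM (Gs k)) -> (forall k, stable_set (E i) (Ws k)) ->
  (forall k, exists z, cylinder (Gs k) i (Ws k) z) ->
  set_eq (concat_sets PM A (fun k => cylinder (Gs k) i (Ws k)))
         (cylinder (concat_sets PM A Gs) i (concat_sets (E i) A Ws)).
Proof.
  intros HA HGs HWs Hne x; unfold cylinder at 2; rewrite !concat_setsE; split.
  - intro H; split; intro k; destruct (H k) as [y [[Hy1 Hy2] Hxy]].
    + exists y; auto.
    + exists (y i); split; [auto | apply (agree_prod (A k) x y), Hxy].
  - intros [H1 H2] k; destruct (H1 k) as [g [Hg Hxg]], (H2 k) as [w [Hw Hxw]].
    destruct (Hne k) as [c [Hc1 Hc2]].
    (* Glue [x] on [A k] with a point [c] of the cylinder off [A k]. *)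
    destruct (glue_two prod_stable_module x c (proj1 HA k)) as [y [Hyx Hyc]].
    exists y; split; [split | apply agree_sym, Hyx].
    + apply (stable_set_glue_two (proj1 HA k) (HGs k) Hg Hc1 (agree_trans Hyx Hxg) Hyc).
    + apply (stable_set_glue_two (proj1 HA k) (HWs k) Hw Hc2); [|apply (agree_prod _ y c), Hyc].
      apply (agree_trans (y := x i)); [apply (agree_prod (A k) y x), Hyx | exact Hxw].
Qed.

Lemma stable_base_cylinders {S : forall i, E i -> Prop} {C0 i C} :
  stable_base PM (prodSet S) C0 -> stable_base (E i) (S i) C ->
  (forall G W, C0 G -> C W -> exists z, cylinder G i W z) ->
  stable_base PM (prodSet S) (cylinders C0 i C).
Proof.
  intros [[[G0 HG0] [HC0st HC0c]] [HC0S HC0d]] [[[W0 HW0] [HCst HCc]] [HCS HCd]] Hne.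
  split; [split; [|split] | split].
  - exists (cylinder G0 i W0), G0, W0; auto.
  - intros Y [G [W [HG [HW ->]]]]; apply cylinder_stable; auto.
  - intros A HA Ys HYs.
    assert (H : forall k, exists p : (PM -> Prop) * (E i -> Prop),
               C0 (fst p) /\ C (snd p) /\ Ys k = cylinder (fst p) i (snd p)).
    { intro k; destruct (HYs k) as [G [W HGW]]; exists (G, W); exact HGW. }
    destruct (choice_dep _ H) as [p Hp].
    destruct (HC0c A HA (fun k => fst (p k))) as [G [HG HGe]]; [intro k; apply Hp |].
    destruct (HCc A HA (fun k => snd (p k))) as [W [HW HWe]]; [intro k; apply Hp |].
    exists (cylinder G i W); split; [exists G, W; auto |].
    replace Ys with (fun k => cylinder (fst (p k)) i (snd (p k)))
      by (apply functional_extensionality; intro k; symmetry; apply Hp).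
    rewrite (set_ext (concat_cylinder HA (fun k => HC0st _ (proj1 (Hp k)))
                           (fun k => HCst _ (proj1 (proj2 (Hp k))))
                           (fun k => Hne _ _ (proj1 (Hp k)) (proj1 (proj2 (Hp k)))))).
    intro x; unfold cylinder; rewrite (HGe x), (HWe (x i)); tauto.
  - intros Y [G [W [HG [HW ->]]]] x [Hx _]; exact (HC0S G HG x Hx).
  - intros Y1 Y2 [G1 [W1 [HG1 [HW1 ->]]]] [G2 [W2 [HG2 [HW2 ->]]]].
    destruct (HC0d G1 G2 HG1 HG2) as [G [HG HGs]], (HCd W1 W2 HW1 HW2) as [W [HW HWs]].
    exists (cylinder G i W); split; [exists G, W; auto |].
    intros x [Hx1 Hx2]; destruct (HGs x Hx1), (HWs _ Hx2); repeat split; auto.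
Qed.

Lemma proj_image_concat {A Gs} i : partition A ->
  set_eq (proj_image i (concat_sets PM A Gs)) (concat_sets (E i) A (fun k => proj_image i (Gs k))).
Proof.
  intros HA x; rewrite concat_setsE; split.
  - intros [g [Hg <-]] k; rewrite concat_setsE in Hg; destruct (Hg k) as [y [Hy Hgy]].
    exists (y i); split; [exists y; auto | apply (agree_prod (A k) g y), Hgy].
  - intro H.
    assert (H' : forall k, exists g, Gs k g /\ agree (E i) (A k) x (g i))
      by (intro k; destruct (H k) as [y [[g [Hg <-]] Hxy]]; exists g; auto).
    destruct (choice_dep _ H') as [g Hg], (concat_exists prod_stable_module g HA) as [z Hz].
    exists z; split.
    + apply concat_setsE; intro k; exists (g k); split; [apply Hg | apply Hz].
    + apply (eq_of_agree_partition (HE i) HA); intro k.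
      apply (agree_trans (y := g k i)); [apply (agree_prod (A k) z (g k)), Hz |].
      apply agree_sym, Hg.
Qed.

Lemma proj_image_stable {G} i : stable_set PM G -> stable_set (E i) (proj_image i G).
Proof.
  intro HG; split.
  - destruct (proj1 HG) as [g Hg]; exists (g i), g; auto.
  - intros A HA ys Hys x Hx.
    assert (Hc : concat_sets (E i) A (fun _ => proj_image i G) x) by (exists ys; auto).
    apply (proj_image_concat i HA) in Hc; destruct Hc as [z [Hz <-]].
    exists z; split; [|reflexivity].
    exact (concat_sets_sub_stable HA HG (fun _ y Hy => Hy) z Hz).
Qed.

Lemma stable_base_proj_images {S : forall i, E i -> Prop} {C0} i :
  stable_base PM (prodSet S) C0 -> stable_base (E i) (S i) (proj_images C0 i).
Proof.
  intros [[[G0 HG0] [HC0st HC0c]] [HC0S HC0d]]; split; [split; [|split] | split].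
  - exists (proj_image i G0), G0; auto.
  - intros Y [G [HG ->]]; apply proj_image_stable, HC0st, HG.
  - intros A HA Ys HYs; destruct (choice_dep _ HYs) as [Gs HGs].
    destruct (HC0c A HA Gs) as [G [HG HGe]]; [intro k; apply HGs |].
    exists (proj_image i G); split; [exists G; auto |].
    replace Ys with (fun k => proj_image i (Gs k))
      by (apply functional_extensionality; intro k; symmetry; apply HGs).
    rewrite (set_ext HGe); apply proj_image_concat, HA.
  - intros Y [G [HG ->]] v [z [Hz <-]]; exact (HC0S G HG z Hz i).
  - intros Y1 Y2 [G1 [HG1 ->]] [G2 [HG2 ->]].
    destruct (HC0d G1 G2 HG1 HG2) as [G [HG HGs]].
    exists (proj_image i G); split; [exists G; auto |].
    intros v [z [Hz <-]]; destruct (HGs z Hz); split; exists z; auto.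
Qed.

End Product.

Section Topology.
Context {X : Type} {S : X -> Prop} {T : (X -> Prop) -> Prop} {B : (X -> Prop) -> Prop}.
Hypotheses (HT : is_topology S T) (HB : is_base T B).

Lemma base_sub {W} : B W -> subset W S.
Proof. intro HW; apply (proj1 HT), (proj1 HB), HW. Qed.

Lemma base_nbhd {v} : S v -> exists W, B W /\ W v.
Proof.
  intro Hv; destruct HT as [_ [[U0 [HU0 HU0S]] _]].
  destruct (proj2 HB U0 HU0 v) as [W [HW [HWv _]]]; [apply HU0S, Hv |].
  exists W; auto.
Qed.

Lemma base_inter {v W1 W2} : B W1 -> B W2 -> W1 v -> W2 v ->
  exists W, B W /\ W v /\ subset W (fun u => W1 u /\ W2 u).
Proof.
  intros H1 H2 Hv1 Hv2; destruct HT as [_ [_ [_ [_ [Hinter _]]]]].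
  destruct (Hinter W1 W2) as [V [HV HVe]]; try apply (proj1 HB); auto.
  destruct (proj2 HB V HV v) as [W [HW [HWv HWV]]]; [apply HVe; auto |].
  exists W; split; [exact HW | split; [exact HWv | intros u Hu; apply HVe, HWV, Hu]].
Qed.

End Topology.

Section StableProduct.
Context {P : ProbSpace} {I : Type} {E : I -> L0Module P}.
Variables (S : forall i, E i -> Prop) (T : forall i, (E i -> Prop) -> Prop)
  (B : forall i, (E i -> Prop) -> Prop).
Hypotheses (HE : forall i, stable_module (E i)) (HS : forall i, stable_set (E i) (S i))
  (HT : forall i, is_topology (S i) (T i)) (HB : forall i, is_base (T i) (B i)).

Notation PM := (prodModule E).
Notation PS := (prodSet S).

Let HPM : stable_module PM := prod_stable_module HE.
Let HPS : stable_set PM PS := prodSet_stable HS.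

Lemma prodTop_cylinder i O : T i O -> prodTop S B (cylinder PS i O).
Proof.
  intro HO; split; [intros z [Hz _]; exact Hz |].
  intros z [Hz HzO].
  destruct (proj2 (HB i) O HO (z i) HzO) as [W [HW [HWz HWO]]].
  (* The box with factor [W] at [i] and full factors elsewhere, over the trivial partition. *)
  pose (Uk := fupdate (X := fun j => E j -> Prop) S i W).
  exists (concat_sets PM part_full (fun _ => prodSet Uk)); split; [|split].
  - exists part_full, (fun _ => cons i nil), (fun _ => Uk).
    split; [apply partition_full | split; [|split; [| intro; tauto]]].
    + intros k j [<-|[]]; unfold Uk; rewrite fupdate_same; exact HW.
    + intros k j Hj; unfold Uk; rewrite fupdate_other; [intro; tauto | intros ->; apply Hj; left; auto].
  - apply (concat_sets_full (prodSet Uk)); intro j.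
    apply (fupdate_ind (X := fun j => E j -> Prop) (fun j U => U (z j))); auto.
  - intros v Hv; apply (concat_sets_full (prodSet Uk)) in Hv; split.
    + intro j; generalize (Hv j).
      apply (fupdate_ind (X := fun j => E j -> Prop) (fun j U => U (v j) -> S j (v j))); auto.
      apply (base_sub (HT i) (HB i) HW).
    + apply HWO; generalize (Hv i); unfold Uk; now rewrite fupdate_same.
Qed.

Lemma stable_compact_factor :
  stable_compact PM PS (prodTop S B) -> forall i, stable_compact (E i) (S i) (T i).
Proof.
  intros Hc i F HF.
  pose (CF := cylinders (fun G => G = PS) i (stable_members (E i) F)).
  assert (HCF : stable_base PM PS CF).
  { apply (stable_base_cylinders HE (stable_base_single HPS)
             (stable_base_members (HE i) (HS i) HF)).
    intros G W -> [HW _].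
    destruct (stable_filter_nonempty HF HW) as [v Hv].
    destruct (prodSet_fiber i v HS (stable_filter_sub HF HW v Hv)) as [z [Hz <-]].
    exists z; split; auto. }
  destruct (Hc _ (stable_filter_upward HCF)) as [x [Hx Hcl]].
  exists (x i); split; [apply Hx |].
  intros O HO HOx G HG.
  destruct (upward_stable_members HF HG) as [_ [G' [HG' HG'G]]].
  assert (Hcyl : upward PS CF (cylinder PS i G)).
  { split; [intros z [Hz _]; exact Hz |].
    exists (cylinder PS i G'); split; [exists PS, G'; auto |].
    intros z [Hz1 Hz2]; split; auto. }
  destruct (Hcl _ (prodTop_cylinder i O HO) (conj Hx HOx) _ Hcyl) as [y [[_ Hy1] [_ Hy2]]].
  exists (y i); auto.
Qed.

Hypothesis HBs : forall i, stable_coll (E i) (B i).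

Definition proj_filter (U : (PM -> Prop) -> Prop) (i : I) : (E i -> Prop) -> Prop :=
  upward (S i) (proj_images (stable_members PM U) i).

Lemma proj_filter_stable U i : stable_filter PM PS U -> stable_filter (E i) (S i) (proj_filter U i).
Proof.
  intro HU; apply stable_filter_upward, (stable_base_proj_images HE i (stable_base_members HPM HPS HU)).
Qed.

Lemma stable_base_basic_nbhds i xi W0 : B i W0 -> W0 xi ->
  stable_base (E i) (S i) (fun W => B i W /\ W xi).
Proof.
  intros HW0 HW0x; split; [split; [|split] | split].
  - exists W0; auto.
  - intros W [HW _]; apply (proj1 (proj2 (HBs i))), HW.
  - intros A HA Ws HWs.
    destruct (proj2 (proj2 (HBs i)) A HA Ws (fun k => proj1 (HWs k))) as [W [HW HWe]].
    exists W; split; [split; [exact HW |] | exact HWe].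
    apply HWe, concat_setsE; intro k; exists xi; split; [apply HWs | reflexivity].
  - intros W [HW _]; apply (base_sub (HT i) (HB i) HW).
  - intros W1 W2 [HW1 Hx1] [HW2 Hx2].
    destruct (base_inter (HT i) (HB i) HW1 HW2 Hx1 Hx2) as [W [HW [Hx HWs]]].
    exists W; auto.
Qed.

(* Adjoining the cylinders around a cluster point of the projection keeps the
   filter proper and stable, so maximality absorbs them. *)
Lemma maximal_filter_cylinder U i xi W :
  maximal_stable_filter PM PS U -> cluster_point (T i) (proj_filter U i) xi ->
  B i W -> W xi -> U (cylinder PS i W).
Proof.
  intros [HU HUmax] Hcl HW HWx.
  pose (CU := cylinders (stable_members PM U) i (fun W => B i W /\ W xi)).
  assert (HCU : stable_base PM PS CU).
  { apply (stable_base_cylinders HE (stable_base_members HPM HPS HU)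
             (stable_base_basic_nbhds i xi W HW HWx)).
    intros G W' HG [HW' HW'x].
    assert (HpG : proj_filter U i (proj_image i G)).
    { split; [intros v [z [Hz <-]]; exact (stable_filter_sub HU (proj1 HG) z Hz i) |].
      exists (proj_image i G); split; [exists G; auto | intros v Hv; exact Hv]. }
    destruct (Hcl W' (proj1 (HB i) W' HW') HW'x _ HpG) as [v [Hv [z [Hz <-]]]].
    exists z; split; auto. }
  apply (HUmax _ (stable_filter_upward HCU)).
  - intros G HG; destruct (upward_stable_members HU HG) as [HGS [G' [HG' HG'G]]].
    split; [exact HGS | exists (cylinder G' i W); split; [exists G', W; auto |]].
    intros z [Hz _]; auto.
  - destruct (stable_filter_stable_sub HU (stable_filter_full HU)) as [G0 [HG0 _]].
    split; [intros z [Hz _]; exact Hz |].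
    exists (cylinder G0 i W); split; [exists G0, W; auto |].
    intros z [Hz1 Hz2]; split; [exact (stable_filter_sub HU (proj1 HG0) z Hz1) | exact Hz2].
Qed.

Lemma maximal_filter_agree_nbhd U i xi A W :
  maximal_stable_filter PM PS U -> S i xi -> cluster_point (T i) (proj_filter U i) xi ->
  meas P A -> B i W -> agree_nbhd (E i) A W xi ->
  U (cylinder PS i (agree_nbhd (E i) A W)).
Proof.
  intros HU Hxi Hcl HA HW [w [Hw Hwx]].
  destruct (base_nbhd (HT i) (HB i) Hxi) as [W0 [HW0 HW0x]].
  (* The basic set that is [W] on [A] and [W0] off [A]. *)
  destruct (proj2 (proj2 (HBs i)) (part_two A) (partition_two A HA)
              (fun n => match n with O => W | _ => W0 end)) as [Z [HZ HZe]];
    [intros [|n]; auto |].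
  assert (HZx : Z xi).
  { apply HZe, concat_setsE; intros [|[|n]].
    - exists w; split; [exact Hw | apply agree_sym, Hwx].
    - exists xi; split; [exact HW0x | reflexivity].
    - exists xi; split; [exact HW0x | apply agree_empty; intros w' []]. }
  apply (stable_filter_up (proj1 HU) (maximal_filter_cylinder U i xi Z HU Hcl HZ HZx)).
  - intros z [Hz HZz]; split; [exact Hz |].
    apply HZe in HZz; rewrite concat_setsE in HZz; destruct (HZz O) as [u [Hu Hzu]].
    exists u; split; [exact Hu | apply agree_sym, Hzu].
  - intros z [Hz _]; exact Hz.
Qed.

Lemma maximal_filter_basic_nbhd U x V :
  maximal_stable_filter PM PS U ->
  (forall i, S i (x i) /\ cluster_point (T i) (proj_filter U i) (x i)) ->
  prodBase S B V -> V x -> U V.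
Proof.
  intros HU Hx [A [fin [Uk [HA [HUk [HUkS HVe]]]]]] HVx.
  rewrite (set_ext HVe) in HVx |- *.
  pose (Loc := fun k z => PS z /\ forall i, List.In i (fin k) ->
                 cylinder PS i (agree_nbhd (E i) (A k) (Uk k i)) z).
  assert (HLoc : forall k, U (Loc k)).
  { intro k; apply (stable_filter_inter_list _ _ (proj1 HU)); intros i Hi.
    apply (maximal_filter_agree_nbhd U i (x i) (A k) (Uk k i) HU (proj1 (Hx i)) (proj2 (Hx i))
             (proj1 HA k) (HUk k i Hi)).
    rewrite concat_setsE in HVx; destruct (HVx k) as [y [Hy Hxy]].
    exists (y i); split; [apply Hy | apply agree_sym, (agree_prod (A k) x y), Hxy]. }
  apply (stable_filter_up (proj1 HU) (stable_filter_concat_mem HPS (proj1 HU) HA HLoc)).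
  - apply concat_sets_sub; intros k z [Hz HzU].
    assert (Hy : forall i, exists v, Uk k i v /\ agree (E i) (A k) (z i) v).
    { intro i; destruct (classic (List.In i (fin k))) as [Hi|Hi].
      - destruct (HzU i Hi) as [_ [u [Hu Huz]]]; exists u; split; [exact Hu | apply agree_sym, Huz].
      - exists (z i); split; [apply (HUkS k i Hi), Hz | reflexivity]. }
    destruct (choice_dep _ Hy) as [y Hyy].
    exists y; split; [intro i; apply Hyy | apply agree_prod; intro i; apply Hyy].
  - apply (concat_sets_sub_stable HA HPS); intros k z Hz i.
    destruct (classic (List.In i (fin k))) as [Hi|Hi].
    + apply (base_sub (HT i) (HB i) (HUk k i Hi)), Hz.
    + apply (HUkS k i Hi), Hz.
Qed.

Lemma stable_compact_prod :
  (forall i, stable_compact (E i) (S i) (T i)) -> stable_compact PM PS (prodTop S B).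
Proof.
  intros Hc F HF.
  destruct (maximal_stable_filter_exists HPM HPS HF) as [U [HU HFU]].
  destruct (choice_dep _ (fun i => Hc i _ (proj_filter_stable U i (proj1 HU)))) as [x Hx].
  exists x; split; [intro i; apply Hx |].
  intros O [_ HObase] HOx G HG.
  destruct (HObase x HOx) as [V [HV [HVx HVO]]].
  destruct (stable_filter_nonempty (proj1 HU)
              (stable_filter_inter (proj1 HU) (maximal_filter_basic_nbhd U x V HU Hx HV HVx)
                 (HFU G HG))) as [z [HzV HzG]].
  exists z; auto.
Qed.

End StableProduct.

Theorem mainTheorem9 (P : ProbSpace) (I : Type) (HI : inhabited I)
  (E : I -> L0Module P) (HE : forall i, stable_module (E i))
  (S : forall i, E i -> Prop) (HS : forall i, stable_set (E i) (S i))
  (T : forall i, (E i -> Prop) -> Prop) (HT : forall i, is_topology (S i) (T i))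
  (B : forall i, (E i -> Prop) -> Prop)
  (HB : forall i, is_base (T i) (B i))
  (HBs : forall i, stable_coll (E i) (B i)) :
  stable_compact (prodModule E) (prodSet S) (prodTop S B) <->
  (forall i, stable_compact (E i) (S i) (T i)).
Proof.
  split.
  - exact (stable_compact_factor S T B HE HS HT HB).
  - exact (stable_compact_prod S T B HE HS HT HB HBs).
Qed.
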